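(* Let $\{c_n\}_{n\in\mathbb Z}$ be complex numbers with $\{c_n\}_{n\ge0}\in NBVS$ and $\{c_n+c_{-n}\}_{n\ge0}\in NBVS$, and suppose $f(x)=\lim_{N\to\infty}\sum_{n=-N}^Nc_ne^{inx}$ exists for all $x$ and $f\in C_{2\pi}$. Then there is a constant $K$, depending only on these sequences, such that for all $m\ge1$ and all $x\in[0,\pi]$, $$\Big|\sum_{k=m}^\infty c_k\sin kx\Big|\le K\max_{k\ge m}k\big(|c_k|+|c_{-k}|\big)\quad\text{and}\quad\Big|\sum_{k=m}^\infty c_{-k}\sin kx\Big|\le K\max_{k\ge m}k\big(|c_k|+|c_{-k}|\big).$$
   Context: For $\theta_0\in[0,\pi/2)$ let $M(\theta_0)=\{z\in\mathbb C: |\arg z|\le\theta_0\}$ (with $0\in M(\theta_0)$). Write $\Delta c_n=c_n-c_{n+1}$. A complex sequence $\mathbf C=\{c_n\}$ belongs to $NBVS$ if there is $\theta_0\in[0,\pi/2)$ with $c_n\in M(\theta_0)$ for all $n\ge1$ and a constant $K(\mathbf C)>0$ such that $\sum_{n=m}^{2m}|\Delta c_n|\le K(\mathbf C)\big(|c_m|+|c_{2m}|\big)$ for all $m\ge1$. $C_{2\pi}$ denotes the continuous $2\pi$-periodic complex functions. *)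

From Stdlib Require Import Reals ZArith.
From Coquelicot Require Import Coquelicot.
Open Scope R_scope.

(* M(theta0) = { z : |arg z| <= theta0 } together with 0:
   z = 0, or z = r e^{i phi} with r > 0 and -theta0 <= phi <= theta0. *)
Definition inM (theta0 : R) (z : C) : Prop :=
  z = 0%C \/
  exists r phi : R, 0 < r /\ - theta0 <= phi <= theta0 /\
                    z = (r * cos phi, r * sin phi)%R.

Definition Delta (c : nat -> C) (n : nat) : C := (c n - c (S n))%C.

Definition NBVS (c : nat -> C) : Prop :=
  (exists theta0 : R, 0 <= theta0 < PI / 2 /\
     forall n : nat, (1 <= n)%nat -> inM theta0 (c n)) /\
  (exists K : R, 0 < K /\
     forall m : nat, (1 <= m)%nat ->
       sum_n_m (fun n => Cmod (Delta c n)) m (2 * m)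
         <= K * (Cmod (c m) + Cmod (c (2 * m)%nat))).

Definition cexpi (t : R) : C := (cos t, sin t).

Definition sym_partial_sum (c : Z -> C) (x : R) (N : nat) : C :=
  sum_n_m (fun k : nat =>
             let n := (Z.of_nat k - Z.of_nat N)%Z in
             (c n * cexpi (IZR n * x))%C) 0 (2 * N).

Definition wk (c : Z -> C) (k : nat) : R :=
  INR k * (Cmod (c (Z.of_nat k)) + Cmod (c (- Z.of_nat k)%Z)).

Definition tail_sup (c : Z -> C) (m : nat) : Rbar :=
  Sup_seq (fun j : nat => Finite (wk c (m + j)%nat)).

Definition sin_tail_term (c : Z -> C) (sgn : bool) (m : nat) (x : R) (j : nat) : C :=
  let k := (m + j)%nat in
  (c (if sgn then Z.of_nat k else (- Z.of_nat k)%Z) * RtoC (sin (INR k * x)))%C.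

From Stdlib Require Import Reals ZArith Lra Lia.
From Coquelicot Require Import Coquelicot.
Open Scope R_scope.

(* Let W bound k |u_k| for k >= m and s = sin (x/2) > 0.
   Summing the block bound over the dyadic blocks [2^j a, 2^(j+1) a) gives
   sum_(i >= a) |u_i - u_(i+1)| <= 3 K W / a.  Since sin (k x) = T_(k+1) - T_k
   with T_j = - cos ((j - 1/2) x) / (2 s) and |T_j| <= 1 / (2 s), summation by
   parts bounds every block of the series starting at a >= m by
   (2 + 3 K) W / (2 s a); this makes the series Cauchy and bounds its part beyond
   k ~ 1/s by a multiple of W.  The first ~ 1/s terms are each at most 2 s W
   because |sin (k x)| <= 2 k s, so together they contribute at most 2 W.
   For complex coefficients, c_(-k) = (c_k + c_(-k)) - c_k. *)

Lemma Rabs_sin_nat_mul_le (n : nat) (t : R) :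
  Rabs (sin (INR n * t)) <= INR n * Rabs (sin t).
Proof.
  induction n as [|n IH].
  - simpl INR. rewrite !Rmult_0_l, sin_0, Rabs_R0; lra.
  - rewrite S_INR, Rmult_plus_distr_r, Rmult_1_l, sin_plus.
    eapply Rle_trans; [apply Rabs_triang|].
    rewrite !Rabs_mult.
    assert (Rabs (cos t) <= 1) by apply Rabs_le, COS_bound.
    assert (Rabs (cos (INR n * t)) <= 1) by apply Rabs_le, COS_bound.
    pose proof (Rabs_pos (sin t)); pose proof (Rabs_pos (sin (INR n * t))).
    nra.
Qed.

Lemma sum_n_m_nonneg (g : nat -> R) (n p : nat) :
  (forall k, 0 <= g k) -> 0 <= sum_n_m g n p.
Proof.
  intros g_ge0.
  rewrite <- (Rmult_0_r (INR (S p - n))), <- sum_n_m_const.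
  exact (sum_n_m_le _ _ n p g_ge0).
Qed.

Lemma sum_n_m_le_upper (g : nat -> R) (n p q : nat) :
  (forall k, 0 <= g k) -> (p <= q)%nat -> sum_n_m g n p <= sum_n_m g n q.
Proof.
  intros g_ge0 pq.
  destruct (le_lt_dec n (S p)) as [np|pn].
  - rewrite (sum_n_m_Chasles g n p q np pq).
    pose proof (sum_n_m_nonneg g (S p) q g_ge0).
    change (plus ?a ?b) with (a + b); lra.
  - rewrite sum_n_m_zero by lia. exact (sum_n_m_nonneg g n q g_ge0).
Qed.

Lemma sum_n_m_shift {G : AbelianMonoid} (a : nat -> G) (p n q : nat) :
  sum_n_m (fun j => a (p + j)%nat) n q = sum_n_m a (p + n) (p + q).
Proof.
  revert a; induction p as [|p IH]; intros a.
  - reflexivity.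
  - cbn [Nat.add]. rewrite <- sum_n_m_S. exact (IH (fun i => a (S i))).
Qed.

Lemma sum_n_m_telescope {G : AbelianGroup} (P : nat -> G) (a b : nat) :
  (a <= b)%nat ->
  sum_n_m (fun k => minus (P (S k)) (P k)) a b = minus (P (S b)) (P a).
Proof.
  induction 1 as [|b ab IH].
  - now rewrite sum_n_n.
  - rewrite sum_n_Sm, IH by lia.
    rewrite (minus_trans (P (S b)) (P (S (S b))) (P a)). apply plus_comm.
Qed.

Lemma sum_n_m_abel {V : ModuleSpace R_Ring} (T : nat -> R) (u : nat -> V) (a b : nat) :
  (a <= b)%nat ->
  sum_n_m (fun k => scal (T (S k) - T k) (u k)) a b =
  plus (minus (scal (T (S b)) (u (S b))) (scal (T a) (u a)))
       (sum_n_m (fun k => scal (T (S k)) (minus (u k) (u (S k)))) a b).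
Proof.
  intros ab.
  rewrite <- sum_n_m_telescope with (P := fun k => scal (T k) (u k)) by exact ab.
  rewrite <- sum_n_m_plus. apply sum_n_m_ext. intros k.
  etransitivity; [exact (scal_minus_distr_r (T (S k)) (T k) (u k))|].
  rewrite scal_minus_distr_l.
  rewrite (minus_trans (scal (T (S k)) (u (S k)))). apply plus_comm.
Qed.

Lemma norm_series_le {K : AbsRing} {V : NormedModule K} (a : nat -> V) (S : V) (M : R) :
  is_series a S -> (forall n, norm (sum_n a n) <= M) -> norm S <= M.
Proof.
  intros aS bound.
  assert (lim : is_lim_seq (fun n => norm (sum_n a n)) (norm S)).
  { exact (filterlim_comp _ _ _ (sum_n a) norm eventually (locally S) _ aS (filterlim_norm S)). }
  exact (is_lim_seq_le _ _ (norm S) M bound lim (is_lim_seq_const M)).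
Qed.

Lemma norm_scal_R {V : NormedModule R_AbsRing} (l : R) (x : V) :
  norm (scal l x) <= Rabs l * norm x.
Proof. exact (norm_scal l x). Qed.

Lemma is_series_zero {K : AbsRing} {V : NormedModule K} (a : nat -> V) :
  (forall n, a n = zero) -> is_series a zero.
Proof.
  intros a0. apply (filterlim_ext (fun _ => zero)); [|apply filterlim_const].
  intro n. unfold sum_n. rewrite (sum_n_m_ext _ (fun _ => zero)) by exact a0.
  symmetry. apply sum_n_m_const_zero.
Qed.

Lemma ex_series_of_tail_le {K : AbsRing} {V : CompleteNormedModule K} (a : nat -> V) (M : R) :
  (forall n q, (n <= q)%nat -> norm (sum_n_m a n q) <= M / INR (S n)) -> ex_series a.
Proof.
  intros tail_le. apply ex_series_Cauchy. intros eps.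
  assert (M_nonneg : 0 <= M).
  { pose proof (tail_le 0%nat 0%nat (le_n 0)) as first_le. simpl in first_le.
    pose proof (norm_ge_0 (sum_n_m a 0 0)). rewrite Rdiv_1_r in first_le. lra. }
  destruct (INR_unbounded (M / eps)) as [N N_gt]. exists N. intros n q Nn Nq.
  destruct (le_lt_dec n q) as [nq|qn].
  - eapply Rle_lt_trans; [exact (tail_le n q nq)|].
    pose proof (cond_pos eps). assert (INR N <= INR n) by (apply le_INR, Nn).
    rewrite S_INR. apply Rlt_div_l; [pose proof (pos_INR n); lra|].
    apply Rlt_div_l in N_gt; [|easy]. nra.
  - rewrite sum_n_m_zero, norm_zero by exact qn. apply cond_pos.
Qed.

Definition sin_primitive (x : R) (j : nat) : R :=
  - cos ((INR j - / 2) * x) / (2 * sin (x / 2)).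

Lemma sin_primitive_succ_sub (x : R) (k : nat) :
  sin (x / 2) <> 0 -> sin_primitive x (S k) - sin_primitive x k = sin (INR k * x).
Proof.
  intros s_neq0. unfold sin_primitive. rewrite S_INR.
  replace ((INR k + 1 - / 2) * x) with (INR k * x + x / 2) by field.
  replace ((INR k - / 2) * x) with (INR k * x - x / 2) by field.
  rewrite cos_plus, cos_minus. field. exact s_neq0.
Qed.

Lemma Rabs_sin_primitive_le (x : R) (j : nat) :
  0 < sin (x / 2) -> Rabs (sin_primitive x j) <= / (2 * sin (x / 2)).
Proof.
  intros s_pos. unfold sin_primitive, Rdiv.
  rewrite Rabs_mult, Rabs_Ropp, (Rabs_right (/ _)) by (left; apply Rinv_0_lt_compat; lra).
  assert (Rabs (cos ((INR j - / 2) * x)) <= 1) by apply Rabs_le, COS_bound.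
  assert (0 < / (2 * sin (x / 2))) by (apply Rinv_0_lt_compat; lra).
  nra.
Qed.

Definition sin_term {V : ModuleSpace R_Ring} (u : nat -> V) (x : R) (k : nat) : V :=
  scal (sin (INR k * x)) (u k).

Section SinSeriesTail.

Variables (V : NormedModule R_AbsRing) (u : nat -> V) (K W : R) (m : nat).
Hypothesis m_pos : (1 <= m)%nat.
Hypothesis K_nonneg : 0 <= K.
Hypothesis weight_le : forall k, (m <= k)%nat -> INR k * norm (u k) <= W.
Hypothesis block_variation_le : forall n, (m <= n)%nat ->
  sum_n_m (fun i => norm (minus (u i) (u (S i)))) n (2 * n)
    <= K * (norm (u n) + norm (u (2 * n)%nat)).

Let variation (i : nat) : R := norm (minus (u i) (u (S i))).

Lemma weight_bound_nonneg : 0 <= W.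
Proof.
  pose proof (weight_le m (le_n m)). pose proof (pos_INR m).
  pose proof (norm_ge_0 (u m)). nra.
Qed.

Lemma norm_le_weight_div (k : nat) : (m <= k)%nat -> norm (u k) <= W / INR k.
Proof.
  intros mk. assert (0 < INR k) by (apply lt_0_INR; lia).
  apply Rmult_le_reg_l with (INR k); [easy|].
  field_simplify; [|lra]. apply weight_le, mk.
Qed.

Lemma variation_dyadic_le (N J : nat) : (m <= N)%nat ->
  sum_n_m variation N (2 ^ J * N - 1) <= 3 * K * W / INR N * (1 - / 2 ^ J).
Proof.
  intros mN. assert (0 < INR N) by (apply lt_0_INR; lia).
  pose proof weight_bound_nonneg.
  induction J as [|J IH].
  - rewrite sum_n_m_zero by (simpl; lia). simpl. rewrite Rinv_1.
    change (@zero R_AbelianMonoid) with 0. lra.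
  - set (n := (2 ^ J * N)%nat) in IH.
    assert (Nn : (N <= n)%nat).
    { pose proof (Nat.pow_gt_lin_r 2 J ltac:(lia)). unfold n. nia. }
    assert (INR_n : INR n = 2 ^ J * INR N) by (unfold n; rewrite mult_INR, pow_INR; easy).
    replace (2 ^ S J * N - 1)%nat with (2 * n - 1)%nat by (unfold n; simpl; lia).
    rewrite (sum_n_m_Chasles variation N (n - 1) (2 * n - 1)) by lia.
    replace (S (n - 1)) with n by lia.
    assert (block : sum_n_m variation n (2 * n - 1) <= K * (norm (u n) + norm (u (2 * n)%nat))).
    { eapply Rle_trans; [|apply block_variation_le; lia].
      apply sum_n_m_le_upper; [intro; apply norm_ge_0|lia]. }
    pose proof (norm_le_weight_div n ltac:(lia)) as un.
    pose proof (norm_le_weight_div (2 * n) ltac:(lia)) as u2n.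
    rewrite mult_INR, INR_n in u2n; rewrite INR_n in un.
    assert (0 < 2 ^ J) by (apply pow_lt; lra).
    assert (K * (norm (u n) + norm (u (2 * n)%nat))
              <= K * (W / (2 ^ J * INR N) + W / (INR 2 * (2 ^ J * INR N))))
      by (apply Rmult_le_compat_l; lra).
    replace (3 * K * W / INR N * (1 - / 2 ^ S J)) with
      (3 * K * W / INR N * (1 - / 2 ^ J)
       + K * (W / (2 ^ J * INR N) + W / (INR 2 * (2 ^ J * INR N))))
      by (simpl; field; lra).
    change (plus ?a ?b) with (a + b); lra.
Qed.

Lemma variation_tail_le (a b : nat) : (m <= a)%nat ->
  sum_n_m variation a b <= 3 * K * W / INR a.
Proof.
  intros ma. assert (0 < INR a) by (apply lt_0_INR; lia).
  pose proof weight_bound_nonneg.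
  eapply Rle_trans.
  { apply (sum_n_m_le_upper variation a b (2 ^ S b * a - 1)); [intro; apply norm_ge_0|].
    pose proof (Nat.pow_gt_lin_r 2 (S b) ltac:(lia)). nia. }
  eapply Rle_trans; [apply variation_dyadic_le, ma|].
  assert (0 < / 2 ^ S b) by (apply Rinv_0_lt_compat, pow_lt; lra).
  assert (0 <= 3 * K * W / INR a)
    by (apply Rmult_le_pos; [nra|left; apply Rinv_0_lt_compat; easy]).
  nra.
Qed.

Lemma norm_sin_sum_le (x : R) (a b : nat) :
  0 < sin (x / 2) -> (m <= a)%nat -> (a <= b)%nat ->
  norm (sum_n_m (sin_term u x) a b) <= (2 + 3 * K) * W / (2 * sin (x / 2) * INR a).
Proof.
  intros s_pos ma ab.
  set (s := sin (x / 2)) in *.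
  set (T := sin_primitive x).
  assert (0 < INR a) by (apply lt_0_INR; lia).
  assert (T_le : forall j, Rabs (T j) <= / (2 * s)) by (intro; apply Rabs_sin_primitive_le, s_pos).
  assert (boundary_le :
    forall k, (a <= k)%nat -> norm (scal (T k) (u k)) <= / (2 * s) * (W / INR a)).
  { intros k ak. eapply Rle_trans; [apply norm_scal_R|].
    apply Rmult_le_compat; [apply Rabs_pos|apply norm_ge_0|apply T_le|].
    eapply Rle_trans; [apply norm_le_weight_div; lia|].
    apply Rmult_le_compat_l; [apply weight_bound_nonneg|].
    apply Rinv_le_contravar; [easy|apply le_INR, ak]. }
  assert (variation_part :
    norm (sum_n_m (fun k => scal (T (S k)) (minus (u k) (u (S k)))) a b)
      <= / (2 * s) * (3 * K * W / INR a)).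
  { eapply Rle_trans; [apply (norm_sum_n_m (V := V))|].
    eapply Rle_trans; [apply (sum_n_m_le _ (fun k => / (2 * s) * variation k))|].
    { intro k. eapply Rle_trans; [apply norm_scal_R|].
      apply Rmult_le_compat_r; [apply norm_ge_0|apply T_le]. }
    rewrite (sum_n_m_mult_l (K := R_Ring)).
    apply Rmult_le_compat_l; [left; apply Rinv_0_lt_compat; lra|].
    apply variation_tail_le, ma. }
  unfold sin_term.
  rewrite (sum_n_m_ext _ (fun k => scal (T (S k) - T k) (u k)))
    by (intro; unfold T; rewrite sin_primitive_succ_sub; [easy|unfold s in s_pos; lra]).
  rewrite sum_n_m_abel by exact ab.
  eapply Rle_trans; [apply (norm_triangle (V := V))|].
  eapply Rle_trans; [apply Rplus_le_compat_r, (norm_triangle (V := V))|].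
  rewrite (norm_opp (V := V)).
  replace ((2 + 3 * K) * W / (2 * s * INR a))
    with (/ (2 * s) * (W / INR a) + / (2 * s) * (W / INR a) + / (2 * s) * (3 * K * W / INR a))
    by (field; lra).
  apply Rplus_le_compat; [apply Rplus_le_compat; apply boundary_le; lia|exact variation_part].
Qed.

Lemma norm_sin_term_le (x : R) (k : nat) :
  0 <= sin (x / 2) -> (m <= k)%nat -> norm (sin_term u x k) <= 2 * sin (x / 2) * W.
Proof.
  intros s_nonneg mk. unfold sin_term.
  assert (sin_le : Rabs (sin (INR k * x)) <= 2 * INR k * sin (x / 2)).
  { replace (INR k * x) with (INR (2 * k) * (x / 2)) by (rewrite mult_INR; simpl; field).
    eapply Rle_trans; [apply Rabs_sin_nat_mul_le|].
    rewrite mult_INR, (Rabs_right (sin (x / 2))) by lra. simpl; lra. }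
  eapply Rle_trans; [apply norm_scal_R|].
  pose proof (weight_le k mk). pose proof (norm_ge_0 (u k)).
  pose proof (Rabs_pos (sin (INR k * x))).
  nra.
Qed.

Lemma norm_sin_partial_sum_le (x : R) (n : nat) :
  0 < sin (x / 2) ->
  norm (sum_n_m (fun j => sin_term u x (m + j)) 0 n) <= (3 + 2 * K) * W.
Proof.
  intros s_pos. set (s := sin (x / 2)) in *. set (g := fun j => sin_term u x (m + j)).
  pose proof weight_bound_nonneg.
  destruct (nfloor_ex (/ s)) as [N [N_le N_gt]]; [left; apply Rinv_0_lt_compat, s_pos|].
  assert (sN_le : s * INR N <= 1).
  { apply (Rmult_le_compat_l s) in N_le; [|lra]. rewrite Rinv_r in N_le; lra. }
  assert (sN_gt : 1 < s * INR (S N)).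
  { apply (Rmult_lt_compat_l s) in N_gt; [|easy]. rewrite Rinv_r in N_gt by lra.
    rewrite S_INR; lra. }
  assert (N_pos : (1 <= N)%nat).
  { destruct N; [|lia]. pose proof (SIN_bound (x / 2)) as [_ s_le1]. fold s in s_le1.
    simpl in sN_gt. lra. }
  assert (head_le : forall q, (q < N)%nat -> norm (sum_n_m g 0 q) <= 2 * W).
  { intros q qN. eapply Rle_trans; [apply (norm_sum_n_m (V := V))|].
    eapply Rle_trans.
    { apply (sum_n_m_le _ (fun _ => 2 * s * W)). intro j.
      apply norm_sin_term_le; [left; exact s_pos|lia]. }
    rewrite sum_n_m_const, Nat.sub_0_r.
    assert (INR (S q) <= INR N) by (apply le_INR; lia).
    assert (s * INR (S q) <= 1) by nra. nra. }
  assert (tail_le : forall q, (N <= q)%nat -> norm (sum_n_m g N q) <= (1 + 3 / 2 * K) * W).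
  { intros q Nq. unfold g. rewrite (sum_n_m_shift (sin_term u x)).
    eapply Rle_trans; [apply norm_sin_sum_le; [easy|lia|lia]|].
    assert (s * INR (S N) <= s * INR (m + N)) by (apply Rmult_le_compat_l; [lra|apply le_INR; lia]).
    replace ((1 + 3 / 2 * K) * W) with ((2 + 3 * K) * W / 2) by field.
    apply Rmult_le_compat_l; [nra|]. apply Rinv_le_contravar; [lra|]. fold s. lra. }
  destruct (le_lt_dec N n) as [Nn|nN].
  - rewrite (sum_n_m_Chasles g 0 (N - 1) n) by lia.
    replace (S (N - 1)) with N by lia.
    eapply Rle_trans; [apply (norm_triangle (V := V))|].
    pose proof (head_le (N - 1)%nat ltac:(lia)). pose proof (tail_le n Nn). nra.
  - pose proof (head_le n nN). nra.
Qed.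

End SinSeriesTail.

Lemma sin_series_tail {V : CompleteNormedModule R_AbsRing} (u : nat -> V) (K W x : R) (m : nat) :
  (1 <= m)%nat -> 0 <= K ->
  (forall k, (m <= k)%nat -> INR k * norm (u k) <= W) ->
  (forall n, (m <= n)%nat ->
     sum_n_m (fun i => norm (minus (u i) (u (S i)))) n (2 * n)
       <= K * (norm (u n) + norm (u (2 * n)%nat))) ->
  0 <= x <= PI ->
  exists S : V, is_series (fun j => sin_term u x (m + j)) S /\
                norm S <= (3 + 2 * K) * W.
Proof.
  intros m_pos K_nonneg weight_le block_le x_range.
  pose proof (weight_bound_nonneg V u W m weight_le) as W_nonneg.
  destruct (Req_dec x 0) as [->|x_neq0].
  - exists zero. split.
    + apply (is_series_zero (V := V)). intro j.
      unfold sin_term. rewrite Rmult_0_r, sin_0. exact (scal_zero_l (u (m + j)%nat)).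
    + eapply Rle_trans; [right; exact (norm_zero (V := V))|nra].
  - assert (s_pos : 0 < sin (x / 2)) by (apply sin_gt_0; lra).
    destruct (ex_series_of_tail_le (fun j => sin_term u x (m + j))
                ((2 + 3 * K) * W / (2 * sin (x / 2)))) as [S HS].
    { intros n q nq. rewrite sum_n_m_shift.
      eapply Rle_trans.
      { apply (norm_sin_sum_le V u K W m m_pos K_nonneg weight_le block_le);
          [exact s_pos|lia|lia]. }
      assert (0 < INR (S n) <= INR (m + n)) by (split; [apply lt_0_INR|apply le_INR]; lia).
      replace ((2 + 3 * K) * W / (2 * sin (x / 2)) / INR (S n))
        with ((2 + 3 * K) * W / (2 * sin (x / 2) * INR (S n))) by (field; lra).
      apply Rmult_le_compat_l; [nra|]. apply Rinv_le_contravar; nra. }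
    exists S. split; [exact HS|].
    apply (norm_series_le (V := V) _ _ _ HS). intro n.
    exact (norm_sin_partial_sum_le V u K W m m_pos K_nonneg weight_le block_le x n s_pos).
Qed.

Lemma Cmod_norm_C_R (z : C) : @norm R_AbsRing C_R_NormedModule z = Cmod z.
Proof.
  destruct z as [a b].
  change (sqrt (Rabs a ^ 2 + Rabs b ^ 2) = sqrt (a ^ 2 + b ^ 2)).
  now rewrite <- !Rsqr_pow2, <- !Rsqr_abs.
Qed.

Lemma sin_term_C_R (u : nat -> C) (x : R) (k : nat) :
  @sin_term C_R_ModuleSpace u x k = (u k * RtoC (sin (INR k * x)))%C.
Proof.
  unfold sin_term. destruct (u k) as [a b].
  apply injective_projections; simpl; change scal with Rmult; ring.
Qed.

Lemma complex_sin_series_tail (a : nat -> C) (K W x : R) (m : nat) :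
  (1 <= m)%nat -> 0 <= K ->
  (forall k, (m <= k)%nat -> INR k * Cmod (a k) <= W) ->
  (forall n, (m <= n)%nat ->
     sum_n_m (fun i => Cmod (a i - a (S i))%C) n (2 * n)
       <= K * (Cmod (a n) + Cmod (a (2 * n)%nat))) ->
  0 <= x <= PI ->
  exists S : C, is_series (fun j => (a (m + j)%nat * RtoC (sin (INR (m + j) * x)))%C) S /\
                Cmod S <= (3 + 2 * K) * W.
Proof.
  intros m_pos K_nonneg weight_le block_le x_range.
  destruct (sin_series_tail (V := C_R_CompleteNormedModule) a K W x m m_pos K_nonneg)
    as [S [HS S_le]]; [| |exact x_range|].
  - intros k mk. rewrite Cmod_norm_C_R. exact (weight_le k mk).
  - intros n mn. rewrite !Cmod_norm_C_R.
    rewrite (sum_n_m_ext _ (fun i => Cmod (a i - a (S i))%C)) by (intro; apply Cmod_norm_C_R).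
    exact (block_le n mn).
  - exists S. split.
    + eapply is_series_ext; [|exact HS]. intro j. apply sin_term_C_R.
    + rewrite <- Cmod_norm_C_R. exact S_le.
Qed.

Lemma Sup_seq_real_ge (w : nat -> R) (B : R) :
  (forall n, w n <= B) -> forall n, w n <= real (Sup_seq (fun j => Finite (w j))).
Proof.
  intros w_le n.
  pose proof (Sup_seq_correct (fun j => Finite (w j))) as is_sup.
  pose proof (Sup_seq_minor_le (fun j => Finite (w j)) (w n) n (Rle_refl _)) as Sup_ge.
  destruct (Sup_seq (fun j => Finite (w j))) as [l| |]; simpl in *.
  - exact Sup_ge.
  - destruct (is_sup B) as [k Bk]. specialize (w_le k). simpl in Bk. lra.
  - contradiction.
Qed.

Lemma wk_le_tail_sup (c : Z -> C) (m : nat) :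
  (exists B, forall k, (m <= k)%nat -> wk c k <= B) ->
  forall k, (m <= k)%nat -> wk c k <= real (tail_sup c m).
Proof.
  intros [B wk_le] k mk.
  replace k with (m + (k - m))%nat by lia.
  apply (Sup_seq_real_ge (fun j => wk c (m + j)) B). intro j. apply wk_le. lia.
Qed.

Lemma wk_nonneg (c : Z -> C) (k : nat) : 0 <= wk c k.
Proof.
  unfold wk. pose proof (pos_INR k).
  pose proof (Cmod_ge_0 (c (Z.of_nat k))). pose proof (Cmod_ge_0 (c (- Z.of_nat k)%Z)). nra.
Qed.

Lemma weight_pos_le_wk (c : Z -> C) (k : nat) : INR k * Cmod (c (Z.of_nat k)) <= wk c k.
Proof.
  unfold wk. apply Rmult_le_compat_l; [apply pos_INR|].
  pose proof (Cmod_ge_0 (c (- Z.of_nat k)%Z)). lra.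
Qed.

Lemma weight_sym_le_wk (c : Z -> C) (k : nat) :
  INR k * Cmod (c (Z.of_nat k) + c (- Z.of_nat k)%Z)%C <= wk c k.
Proof. unfold wk. apply Rmult_le_compat_l; [apply pos_INR|apply Cmod_triangle]. Qed.

Theorem lemma6 (c : Z -> C) (f : R -> C) :
  NBVS (fun n : nat => c (Z.of_nat n)) ->
  NBVS (fun n : nat => (c (Z.of_nat n) + c (- Z.of_nat n)%Z)%C) ->
  (forall x : R, filterlim (sym_partial_sum c x) eventually (locally (f x))) ->
  (forall x : R, continuous f x) ->
  (forall x : R, f (x + 2 * PI) = f x) ->
  exists K : R,
    forall (m : nat) (x : R),
      (1 <= m)%nat -> 0 <= x <= PI ->
      (exists B : R, forall k : nat, (m <= k)%nat -> wk c k <= B) ->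
      (exists S : C, is_series (sin_tail_term c true m x) S /\
                     Cmod S <= K * real (tail_sup c m)) /\
      (exists S : C, is_series (sin_tail_term c false m x) S /\
                     Cmod S <= K * real (tail_sup c m)).
Proof.
  intros [_ [K1 [K1_pos block1]]] [_ [K2 [K2_pos block2]]] _ _ _.
  exists (6 + 2 * K1 + 2 * K2). intros m x m_pos x_range wk_bounded.
  set (l := real (tail_sup c m)).
  pose proof (wk_le_tail_sup c m wk_bounded) as wk_le.
  assert (l_nonneg : 0 <= l) by exact (Rle_trans _ _ _ (wk_nonneg c m) (wk_le m (le_n m))).
  destruct (complex_sin_series_tail (fun n => c (Z.of_nat n)) K1 l x m m_pos
              (Rlt_le _ _ K1_pos)) as [S1 [HS1 S1_le]]; [| |exact x_range|].
  { intros k mk. exact (Rle_trans _ _ _ (weight_pos_le_wk c k) (wk_le k mk)). }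
  { intros n mn. apply block1. lia. }
  destruct (complex_sin_series_tail (fun n => c (Z.of_nat n) + c (- Z.of_nat n)%Z)%C K2 l x m
              m_pos (Rlt_le _ _ K2_pos)) as [S2 [HS2 S2_le]]; [| |exact x_range|].
  { intros k mk. exact (Rle_trans _ _ _ (weight_sym_le_wk c k) (wk_le k mk)). }
  { intros n mn. apply block2. lia. }
  split.
  - exists S1. split; [exact HS1|nra].
  - exists (S2 - S1)%C. split.
    + eapply is_series_ext; [|exact (is_series_minus _ _ _ _ HS2 HS1)].
      intro j. unfold sin_tail_term; simpl. change plus with Cplus. change opp with Copp. ring.
    + eapply Rle_trans; [apply Cmod_triangle|]. rewrite Cmod_opp. nra.
Qed.
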